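(* Let $(\mathcal B,<)$ be a monoidal poset, $B\in\mathcal B$, and $i\sim j$ nodes with $r_ir_jB=r_jB$. If $r_iB<B$ and $r_jB<B$, then $\alpha_i+\alpha_j\in B$.
   Context: Setting: $M$ is a spherical simply laced Coxeter diagram with nodes $1,\dots,n$ ($i\sim j$: distinct adjacent nodes; $i\not\sim j$ otherwise); $W$ its Weyl group with positive roots $\Phi^+$, fundamental roots $\alpha_i$, reflections $r_i$, inner product with $(\alpha_i,\alpha_i)=2$, $(\alpha_i,\alpha_j)=-1$ if $i\sim j$, $0$ otherwise; height $\mathrm{ht}(\sum a_k\alpha_k)=\sum a_k$. For a set $B$ of mutually orthogonal positive roots, $wB=\Phi^+\cap\{\pm w\beta:\beta\in B\}$. A $W$-orbit $\mathcal B$ of such sets is admissible if for every $B\in\mathcal B$, all nodes $i\not\sim j$ and root $\gamma$ with $\gamma,\gamma-\alpha_i+\alpha_j\in B$, $r_iB=r_jB$. For $B,C\in\mathcal B$ write $B\prec C$ if $B\ne C$ and the minimal height of an element of $B\setminus C$ is strictly smaller than the minimal height of an element of $C\setminus B$. For admissible $\mathcal B$, the monoidal poset $(\mathcal B,<)$ is $\mathcal B$ with the partial order $<$ given by the transitive closure of the relation $\{(B,r_jB): B\in\mathcal B,\ j\text{ a node},\ B\prec r_jB\}$; $>$ denotes the reverse relation. *)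

From mathcomp Require Import all_boot all_order all_algebra finmap.
From Stdlib Require Import Relations.Relation_Operators.
Set Implicit Arguments. Unset Strict Implicit. Unset Printing Implicit Defensive.
Import GRing.Theory Num.Theory.
Local Open Scope ring_scope.
Local Open Scope fset_scope.

(* Coxeter diagram on nodes 'I_n given by an adjacency relation [e]
   (assumed symmetric and irreflexive); [e i j] means i ~ j.
   Vectors of the root lattice are written in the basis of fundamental
   roots: v = \sum_k v 0 k * alpha_k, as integer row vectors. *)

Section Roots.
Variables (n : nat) (e : rel 'I_n).

Definition cartan (k l : 'I_n) : int :=
  if k == l then 2 else if e k l then -1 else 0.

Definition root_ip (u v : 'rV[int]_n) : int :=
  \sum_(k < n) \sum_(l < n) u 0 k * v 0 l * cartan k l.

Definition alpha (i : 'I_n) : 'rV[int]_n := delta_mx 0 i.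

Definition height (v : 'rV[int]_n) : int := \sum_(k < n) v 0 k.

Definition spherical : Prop :=
  forall v : 'rV[int]_n, v != 0 -> 0 < root_ip v v.

Definition refl (i : 'I_n) (v : 'rV[int]_n) : 'rV[int]_n :=
  v - (root_ip v (alpha i)) *: alpha i.

(* an element of W given as a word in the simple reflections,
   acting by w = r_(w_1) ... r_(w_k) *)
Definition actw (w : seq 'I_n) (v : 'rV[int]_n) : 'rV[int]_n :=
  foldr refl v w.

Definition is_root (v : 'rV[int]_n) : Prop :=
  exists (w : seq 'I_n) (i : 'I_n), v = actw w (alpha i).

Definition pos_vec (v : 'rV[int]_n) : bool := [forall k, 0 <= v 0 k].

Definition pos_root (v : 'rV[int]_n) : Prop := is_root v /\ pos_vec v.

Definition orth_pos_set (B : {fset 'rV[int]_n}) : Prop :=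
  (forall b, b \in B -> pos_root b) /\
  (forall b c, b \in B -> c \in B -> b != c -> root_ip b c = 0).

(* wB = Phi^+ \cap {+- w beta : beta in B}; for B a set of roots the
   vectors +- w beta are roots, so intersecting with Phi^+ amounts to
   keeping the ones with nonnegative coordinates *)
Definition act_set (w : seq 'I_n) (B : {fset 'rV[int]_n}) : {fset 'rV[int]_n} :=
  [fset x in ([seq actw w b | b <- B] ++ [seq - actw w b | b <- B]) | pos_vec x].

Definition rset (j : 'I_n) (B : {fset 'rV[int]_n}) := act_set [:: j] B.

Definition in_Worbit (B0 B : {fset 'rV[int]_n}) : Prop :=
  exists w : seq 'I_n, B = act_set w B0.

Definition admissible (B0 : {fset 'rV[int]_n}) : Prop :=
  forall B, in_Worbit B0 B ->
  forall (i j : 'I_n), ~~ e i j ->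
  forall g, g \in B -> (g - alpha i + alpha j)%R \in B -> rset i B = rset j B.

(* B \prec C: B <> C and min height of B \ C < min height of C \ B
   (min over the empty set being +infinity) *)
Definition prec (B C : {fset 'rV[int]_n}) : Prop :=
  B <> C /\
  exists2 b, b \in B `\` C &
    forall c, c \in C `\` B -> height b < height c.

Definition mstep (B0 : {fset 'rV[int]_n}) (X Y : {fset 'rV[int]_n}) : Prop :=
  in_Worbit B0 X /\ (exists j, Y = rset j X) /\ prec X Y.

Definition mlt (B0 : {fset 'rV[int]_n}) : {fset 'rV[int]_n} -> {fset 'rV[int]_n} -> Prop :=
  clos_trans _ (mstep B0).

End Roots.

(* Only two features of the setting are used: B is a set of mutually
   orthogonal positive roots, and B' < B implies B' \prec B because \prec
   is transitive.
   If alpha_i lies in r_j B, then r_j alpha_i = alpha_i + alpha_j lies in B.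
   Otherwise r_i stabilises r_j B, which does not contain alpha_i; this forces
   r_j B to be orthogonal to alpha_i, i.e. B to be orthogonal to
   alpha_i + alpha_j, so neither alpha_i nor alpha_j lies in B.  A descent
   r_k B < B with alpha_k not in B is then witnessed by some b in B with
   (b, alpha_k) = 1 whose height is minimal outside r_k B.  The witnesses b
   for i and b' for j have equal heights, so b - alpha_i - b' + alpha_j is a
   vector of norm 2, hence of constant sign, and of height 0: absurd. *)

From mathcomp Require Import all_boot all_order all_algebra finmap zify ring.
Set Implicit Arguments.
Unset Strict Implicit.
Unset Printing Implicit Defensive.
Import Order.TTheory GRing.Theory Num.Theory.
Local Open Scope fset_scope.
Local Open Scope ring_scope.

Section RootLattice.
Variables (n : nat) (e : rel 'I_n).
Hypotheses (e_sym : symmetric e) (e_irr : irreflexive e).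
Local Notation V := 'rV[int]_n.
Local Notation ip := (root_ip e).
Local Notation refl := (refl e).

Lemma cartanC (k l : 'I_n) : cartan e k l = cartan e l k.
Proof. by rewrite /cartan eq_sym e_sym. Qed.

Lemma cartan_diag (k : 'I_n) : cartan e k k = 2.
Proof. by rewrite /cartan eqxx. Qed.

Lemma cartan_adj (k l : 'I_n) : e k l -> cartan e k l = -1.
Proof.
by move=> kl; rewrite /cartan kl; case: eqP kl => // ->; rewrite e_irr.
Qed.

Lemma root_ipDl (u v w : V) : ip (u + v) w = ip u w + ip v w.
Proof.
rewrite /root_ip -big_split; apply: eq_bigr => k _.
by rewrite -big_split; apply: eq_bigr => l _; rewrite mxE !mulrDl.
Qed.

Lemma root_ipZl (a : int) (u w : V) : ip (a *: u) w = a * ip u w.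
Proof.
rewrite /root_ip mulr_sumr; apply: eq_bigr => k _.
by rewrite mulr_sumr; apply: eq_bigr => l _; rewrite mxE -!mulrA.
Qed.

Lemma root_ipNl (u w : V) : ip (- u) w = - ip u w.
Proof. by rewrite -scaleN1r root_ipZl mulN1r. Qed.

Lemma root_ipBl (u v w : V) : ip (u - v) w = ip u w - ip v w.
Proof. by rewrite root_ipDl root_ipNl. Qed.

Lemma root_ipC (u v : V) : ip u v = ip v u.
Proof.
rewrite /root_ip exchange_big; apply: eq_bigr => k _.
by apply: eq_bigr => l _; rewrite cartanC; ring.
Qed.

Lemma root_ipDr (u v w : V) : ip w (u + v) = ip w u + ip w v.
Proof. by rewrite root_ipC root_ipDl !(root_ipC w). Qed.

Lemma root_ipZr (a : int) (u w : V) : ip w (a *: u) = a * ip w u.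
Proof. by rewrite root_ipC root_ipZl root_ipC. Qed.

Lemma root_ipNr (u w : V) : ip w (- u) = - ip w u.
Proof. by rewrite root_ipC root_ipNl root_ipC. Qed.

Lemma root_ipBr (u v w : V) : ip w (u - v) = ip w u - ip w v.
Proof. by rewrite root_ipDr root_ipNr. Qed.

Lemma root_ip0l (w : V) : ip 0 w = 0.
Proof. by rewrite -(scale0r 0) root_ipZl mul0r. Qed.

Lemma alphaE (i k : 'I_n) : alpha i 0 k = (k == i)%:R.
Proof. by rewrite mxE eqxx. Qed.

Lemma root_ip_alphar (u : V) (i : 'I_n) :
  ip u (alpha i) = \sum_k u 0 k * cartan e k i.
Proof.
apply: eq_bigr => k _; rewrite (bigD1 i) //= alphaE eqxx mulr1 big1 ?addr0 //.
by move=> l /negbTE li; rewrite alphaE li mulr0 mul0r.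
Qed.

Lemma root_ip_alpha (i j : 'I_n) : ip (alpha i) (alpha j) = cartan e i j.
Proof.
rewrite root_ip_alphar (bigD1 i) //= alphaE eqxx mul1r big1 ?addr0 //.
by move=> l /negbTE li; rewrite alphaE li mul0r.
Qed.

Lemma root_ip_alphaxx (i : 'I_n) : ip (alpha i) (alpha i) = 2.
Proof. by rewrite root_ip_alpha cartan_diag. Qed.

Lemma root_ip_even (u : V) : exists m, ip u u = 2 * m.
Proof.
rewrite (row_sum_delta u).
apply: (big_ind (fun x : V => exists m, ip x x = 2 * m)).
- by exists 0; rewrite root_ip0l mulr0.
- move=> x y [mx hx] [my hy]; exists (mx + ip x y + my).
  by rewrite !(root_ipDl, root_ipDr) hx hy (root_ipC y x); ring.
- move=> k _; exists (u 0 k ^+ 2).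
  by rewrite root_ipZl root_ipZr [ip _ _]root_ip_alphaxx; ring.
Qed.

Lemma heightD (u v : V) : height (u + v) = height u + height v.
Proof. by rewrite /height -big_split; apply: eq_bigr => k _; rewrite mxE. Qed.

Lemma heightZ (a : int) (u : V) : height (a *: u) = a * height u.
Proof. by rewrite /height mulr_sumr; apply: eq_bigr => k _; rewrite mxE. Qed.

Lemma heightN (u : V) : height (- u) = - height u.
Proof. by rewrite -scaleN1r heightZ mulN1r. Qed.

Lemma heightB (u v : V) : height (u - v) = height u - height v.
Proof. by rewrite heightD heightN. Qed.

Lemma height_alpha (i : 'I_n) : height (alpha i) = 1.
Proof.
rewrite /height (bigD1 i) //= alphaE eqxx big1 ?addr0 //.
by move=> l /negbTE li; rewrite alphaE li.
Qed.

Lemma reflE (k : 'I_n) (u : V) : refl k u = u - ip u (alpha k) *: alpha k.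
Proof. by []. Qed.

Lemma root_ip_refl k (u v : V) : ip (refl k u) (refl k v) = ip u v.
Proof.
rewrite !reflE !(root_ipBl, root_ipBr, root_ipZl, root_ipZr) root_ip_alphaxx.
by rewrite (root_ipC (alpha k) v); ring.
Qed.

Lemma root_ip_refl_alpha k (u : V) : ip (refl k u) (alpha k) = - ip u (alpha k).
Proof. by rewrite reflE root_ipBl root_ipZl root_ip_alphaxx; ring. Qed.

Lemma reflN k (u : V) : refl k (- u) = - refl k u.
Proof. by rewrite !reflE root_ipNl scaleNr opprD. Qed.

Lemma reflK k : involutive (refl k).
Proof. by move=> u; rewrite {1}reflE root_ip_refl_alpha scaleNr opprK subrK. Qed.

Lemma root_ip_actw w (u v : V) : ip (actw e w u) (actw e w v) = ip u v.
Proof. by elim: w => //= k w IH; rewrite root_ip_refl. Qed.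

Lemma root_ip_root (v : V) : is_root e v -> ip v v = 2.
Proof. by case=> w [i ->]; rewrite root_ip_actw root_ip_alphaxx. Qed.

Lemma pos_vec_eq0 (v : V) : pos_vec v -> pos_vec (- v) -> v = 0.
Proof.
move=> /forallP vge0 /forallP Nvge0; apply/rowP => k.
by have := vge0 k; have := Nvge0 k; rewrite !mxE; set x := v 0 k; lia.
Qed.

Lemma pos_vec_height_eq0 (v : V) : pos_vec v -> height v = 0 -> v = 0.
Proof.
move=> /forallP vge0 hv0; apply/rowP => k; rewrite mxE.
by apply: (psumr_eq0P (P := predT) (F := fun k => v 0 k)) => // l _.
Qed.

Lemma root_ip_disjoint_le0 (p q : V) : pos_vec p -> pos_vec q ->
  (forall k, p 0 k * q 0 k = 0) -> ip p q <= 0.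
Proof.
move=> /forallP pge0 /forallP qge0 pq0.
apply: sumr_le0 => k _; apply: sumr_le0 => l _.
have [<-|kl] := eqVneq k l; first by rewrite pq0 mul0r.
have : cartan e k l <= 0 by rewrite /cartan (negbTE kl); case: (e k l).
by have := pge0 k; have := qge0 l; nia.
Qed.

Hypothesis sph : spherical e.

Lemma root_ip_ge2 (u : V) : u != 0 -> 2 <= ip u u.
Proof. by move=> /sph; have [m ->] := root_ip_even u; lia. Qed.

Lemma root_ip_le1 (x y : V) : ip x x = 2 -> ip y y = 2 -> x != y -> ip x y <= 1.
Proof.
move=> xx yy; rewrite -subr_eq0 => /root_ip_ge2.
by rewrite !(root_ipBl, root_ipBr) xx yy (root_ipC y x); lia.
Qed.

Lemma norm2_sign (v : V) : ip v v = 2 -> pos_vec v || pos_vec (- v).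
Proof.
move=> vv; apply: contraT => /norP[/forallPn[k vk] /forallPn[l vl]].
rewrite mxE in vl.
(* The positive and negative parts of v have disjoint supports, so their
   inner product is <= 0 and v would have norm at least 4. *)
pose p : V := \row_m Num.max (v 0 m) 0.
pose q : V := \row_m Num.max (- v 0 m) 0.
have vE : v = p - q.
  by apply/rowP => m; rewrite !mxE; set x := v 0 m; lia.
have p_neq0 : p != 0.
  by apply/eqP => /rowP /(_ l); rewrite !mxE; move: vl; set x := v 0 l; lia.
have q_neq0 : q != 0.
  by apply/eqP => /rowP /(_ k); rewrite !mxE; move: vk; set x := v 0 k; lia.
have pq_le0 : ip p q <= 0.
  apply: root_ip_disjoint_le0; try apply/forallP;
    by move=> m; rewrite !mxE; set x := v 0 m; lia.
have := root_ip_ge2 p_neq0; have := root_ip_ge2 q_neq0.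
by move: vv; rewrite vE !(root_ipBl, root_ipBr) (root_ipC q p); lia.
Qed.

Lemma norm2_neq0 (v : V) : ip v v = 2 -> v != 0.
Proof. by apply: contra_eqN => /eqP->; rewrite root_ip0l. Qed.

Lemma norm2_height_neq0 (v : V) : ip v v = 2 -> height v != 0.
Proof.
move=> vv; apply/eqP => hv0.
case/orP: (norm2_sign vv) => [vpos|Nvpos]; move/norm2_neq0/eqP: vv; apply.
  exact: pos_vec_height_eq0.
apply/oppr_inj; rewrite oppr0.
by apply: pos_vec_height_eq0; rewrite ?heightN ?hv0.
Qed.

Lemma refl_pos (k : 'I_n) (b : V) :
  pos_vec b -> ip b b = 2 -> b != alpha k -> pos_vec (refl k b).
Proof.
move=> /forallP bge0 bb b_neq.
have /orP[//|/forallP Nrbge0] : pos_vec (refl k b) || pos_vec (- refl k b).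
  by apply: norm2_sign; rewrite root_ip_refl.
exfalso; move/eqP: b_neq; apply.
have bE : b = b 0 k *: alpha k.
  apply/rowP => l; rewrite !mxE eqxx mulr_natr.
  have [-> //|lk] := eqVneq l k.
  have := bge0 l; have := Nrbge0 l; rewrite !mxE (negbTE lk) mulr0 subr0.
  by set x := b 0 l; lia.
have bk1 : b 0 k = 1.
  move: bb (bge0 k); rewrite {1 2}bE root_ipZl root_ipZr root_ip_alphaxx.
  by set x := b 0 k; nia.
by rewrite bE bk1 scale1r.
Qed.

Definition orth_pos_norm2 (X : {fset V}) : Prop :=
  (forall x, x \in X -> pos_vec x /\ ip x x = 2) /\
  {in X &, forall x y, x != y -> ip x y = 0}.

Lemma orth_pos_set_norm2 (X : {fset V}) : orth_pos_set e X -> orth_pos_norm2 X.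
Proof.
case=> Xroots Xorth; split=> // x /Xroots[xroot xpos].
by split=> //; apply: root_ip_root.
Qed.

Lemma mem_act_set (w : seq 'I_n) (X : {fset V}) (y : V) :
  y \in act_set e w X <->
  pos_vec y /\ exists2 x, x \in X & y = actw e w x \/ y = - actw e w x.
Proof.
rewrite !inE mem_cat; split.
  case/andP=> /orP[|] /mapP[x xX ->] ypos;
    split=> //; exists x => //; by [left|right].
case=> ypos [x xX yE]; rewrite ypos andbT.
by apply/orP; case: yE => ->; [left|right]; apply: map_f.
Qed.

Lemma orth_pos_norm2_act (w : seq 'I_n) (X : {fset V}) :
  orth_pos_norm2 X -> orth_pos_norm2 (act_set e w X).
Proof.
case=> Xnorm Xorth; split.
  move=> y /mem_act_set[ypos [x /Xnorm[_ xx] yE]]; split=> //.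
  by case: yE => ->; rewrite ?(root_ipNl, root_ipNr, opprK) root_ip_actw.
move=> y z /mem_act_set[ypos [x xX yE]] /mem_act_set[zpos [x' x'X zE]] yz.
have [xx'|xx'] := eqVneq x x'; last first.
  have := Xorth x x' xX x'X xx'; rewrite -(root_ip_actw w).
  case: yE => ->; case: zE => ->; rewrite ?(root_ipNl, root_ipNr) => ->;
  by rewrite ?oppr0.
subst x'; have /norm2_neq0/eqP[] : ip (actw e w x) (actw e w x) = 2.
  by rewrite root_ip_actw; apply: (Xnorm x xX).2.
by case: yE zE ypos zpos yz => -> [] -> ypos zpos yz; rewrite ?eqxx // in yz;
  apply: pos_vec_eq0.
Qed.

Lemma refl_or_opp_mem_rset (X : {fset V}) k x : x \in X -> ip x x = 2 ->
  (refl k x \in rset e k X) || (- refl k x \in rset e k X).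
Proof.
move=> xX xx; have rxx : ip (refl k x) (refl k x) = 2 by rewrite root_ip_refl.
case/orP: (norm2_sign rxx) => rxpos; apply/orP; [left|right];
  apply/mem_act_set; split=> //; exists x => //; by [left|right].
Qed.

Lemma refl_mem_of_rset (X : {fset V}) k y : orth_pos_norm2 X ->
  y \in rset e k X -> pos_vec (refl k y) -> refl k y \in X.
Proof.
move=> [Xnorm _] /mem_act_set[_ [x xX [->|->]]] /=; first by rewrite reflK.
rewrite reflN reflK => Nxpos; have [xpos /norm2_neq0 x_neq0] := Xnorm x xX.
by rewrite (pos_vec_eq0 xpos Nxpos) eqxx in x_neq0.
Qed.

Lemma mem_rset (X : {fset V}) k y : orth_pos_norm2 X -> alpha k \notin X ->
  (y \in rset e k X) = (refl k y \in X).
Proof.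
move=> Xn akX.
have reflX_pos x : x \in X -> pos_vec (refl k x).
  move=> xX; have [xpos xx] := Xn.1 x xX; apply: refl_pos => //.
  by apply: contraNneq akX => <-.
apply/idP/idP => [yrX|ryX].
  case/mem_act_set: yrX => ypos [x xX [->|yE]]; first by rewrite /= reflK.
  have rx0 : refl k x = 0 by apply: pos_vec_eq0; rewrite ?reflX_pos -?yE.
  have /norm2_neq0 : ip (refl k x) (refl k x) = 2.
    by rewrite root_ip_refl; apply: (Xn.1 x xX).2.
  by rewrite rx0 eqxx.
apply/mem_act_set; split; first by rewrite -[y](reflK k); apply: reflX_pos.
by exists (refl k y) => //; left; rewrite /= reflK.
Qed.

Lemma orth_alpha_of_mem_rset (X : {fset V}) k x : orth_pos_norm2 X ->
  alpha k \notin X -> x \in X -> x \in rset e k X -> ip x (alpha k) = 0.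
Proof.
move=> Xn akX xX; rewrite mem_rset // => rxX.
have [rx_x|rx_neq] := eqVneq (refl k x) x.
  by have := root_ip_refl_alpha k x; rewrite rx_x; lia.
(* Otherwise x and r_k x are orthogonal, i.e. (x, alpha_k)^2 = 2. *)
have := Xn.2 _ _ rxX xX rx_neq.
rewrite reflE root_ipBl root_ipZl (Xn.1 x xX).2 (root_ipC (alpha k)).
set c := ip x (alpha k).
by have [] := lerP c 1; have [] := lerP (-1) c; nia.
Qed.

Lemma prec_trans (X Y Z : {fset V}) : prec X Y -> prec Y Z -> prec X Z.
Proof.
move=> [_ [x + xmin]] [_ [y + ymin]]; rewrite !inE => /andP[xY xX] /andP[yZ yY].
suff [z zXZ zmin] : exists2 z, z \in X `\` Z &
    forall c, c \in Z `\` X -> height z < height c.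
  by split=> [XZ|]; [rewrite XZ in_fsetD andNb in zXZ | exists z].
have [hxy|hyx] := lerP (height x) (height y).
  have xZ : x \notin Z.
    by apply: contraTN hxy => xZ; rewrite -ltNge ymin // !inE xZ xY.
  exists x => [|c]; first by rewrite !inE xZ xX.
  rewrite !inE => /andP[cX cZ]; case cY: (c \in Y).
    by apply: xmin; rewrite !inE cX cY.
  by apply: le_lt_trans hxy (ymin _ _); rewrite !inE cY cZ.
have yX : y \in X.
  by apply: contraTT hyx => yX; rewrite -leNgt ltW // xmin // !inE yX yY.
exists y => [|c]; first by rewrite !inE yZ yX.
rewrite !inE => /andP[cX cZ]; case cY: (c \in Y).
  by apply: lt_trans hyx (xmin _ _); rewrite !inE cX cY.
by apply: ymin; rewrite !inE cY cZ.
Qed.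

Lemma mlt_prec (B0 X Y : {fset V}) : mlt e B0 X Y -> prec X Y.
Proof.
elim=> [{}X {}Y [_ [_ [_ XY]]] | {}X Y' {}Y _ XY' _ Y'Y] //.
exact: prec_trans XY' Y'Y.
Qed.

Lemma root_ip_alpha_adj (i j : 'I_n) : e i j -> ip (alpha i) (alpha j) = -1.
Proof. by move=> ij; rewrite root_ip_alpha cartan_adj. Qed.

Lemma refl_alpha_adj (i j : 'I_n) : e i j -> refl j (alpha i) = alpha i + alpha j.
Proof. by move=> ij; rewrite reflE root_ip_alpha_adj // scaleN1r opprK. Qed.

Lemma root_ip_refl_adj (i j : 'I_n) (u : V) :
  e i j -> ip (refl j u) (alpha i) = ip u (alpha i + alpha j).
Proof.
move=> ij; rewrite reflE root_ipBl root_ipZl root_ip_alpha_adj ?(e_sym j) //.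
by rewrite mulrN1 opprK root_ipDr.
Qed.

Lemma prec_rset_witness (X : {fset V}) k : orth_pos_norm2 X ->
  alpha k \notin X -> prec (rset e k X) X ->
  exists2 b, b \in X & ip b (alpha k) = 1 /\
    {in X, forall c, c \notin rset e k X -> height b <= height c}.
Proof.
move=> Xn akX [_ [b' + b'min]]; rewrite in_fsetD mem_rset // => /andP[b'X bX].
set b := refl k b' in bX; have b'E : b' = refl k b by rewrite reflK.
have bk_neq0 : ip b (alpha k) != 0.
  by apply: contra b'X => /eqP bk0; rewrite b'E reflE bk0 scale0r subr0.
have b_notin : b \notin rset e k X.
  by apply: contra bk_neq0 => /(orth_alpha_of_mem_rset Xn akX bX) ->.
have hb' : height b' = height b - ip b (alpha k).
  by rewrite b'E reflE heightB heightZ height_alpha mulr1.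
have bk_le1 : ip b (alpha k) <= 1.
  apply: root_ip_le1; rewrite ?root_ip_alphaxx ?(Xn.1 b bX).2 //.
  by apply: contraNneq akX => <-.
have := b'min b; rewrite in_fsetD b_notin bX hb' => /(_ isT) b'_lt_b.
exists b => //; split=> [|c cX c_notin]; first by move: bk_neq0; lia.
by have := b'min c; rewrite in_fsetD c_notin cX hb' => /(_ isT); lia.
Qed.

Lemma no_double_descent (X : {fset V}) i j : orth_pos_norm2 X -> e i j ->
  {in X, forall b, ip b (alpha i + alpha j) = 0} ->
  prec (rset e i X) X -> prec (rset e j X) X -> False.
Proof.
move=> Xn ij Xorth Pi Pj.
have aij := root_ip_alpha_adj ij.
have aji := root_ip_alpha_adj (etrans (e_sym j i) ij).
have [aiX ajX] : alpha i \notin X /\ alpha j \notin X.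
  by split; apply/negP => /Xorth; rewrite root_ipDr root_ip_alphaxx ?aij ?aji.
have [b bX [bi bmin]] := prec_rset_witness Xn aiX Pi.
have [b' b'X [b'j b'min]] := prec_rset_witness Xn ajX Pj.
have bj : ip b (alpha j) = -1.
  by have := Xorth b bX; rewrite root_ipDr bi; lia.
have b'i : ip b' (alpha i) = -1.
  by have := Xorth b' b'X; rewrite root_ipDr b'j; lia.
have bb' : ip b b' = 0.
  by apply: Xn.2 => //; apply: contra_eqN bi => /eqP->; rewrite b'i.
have hbb' : height b = height b'.
  apply/eqP; rewrite eq_le bmin ?b'min //; apply/negP.
    by move=> /(orth_alpha_of_mem_rset Xn ajX bX); rewrite bj.
  by move=> /(orth_alpha_of_mem_rset Xn aiX b'X); rewrite b'i.
pose v := b - alpha i - (b' - alpha j).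
have /norm2_height_neq0/eqP[] : ip v v = 2.
  rewrite !(root_ipBl, root_ipBr) !root_ip_alphaxx (Xn.1 b bX).2 (Xn.1 b' b'X).2.
  rewrite !(root_ipC (alpha _) b) !(root_ipC (alpha _) b') (root_ipC b' b).
  by rewrite aij aji bi bj b'i b'j bb'; lia.
by rewrite /v !heightB !height_alpha hbb' subrr.
Qed.

End RootLattice.

Theorem lemma3p2 (n : nat) (e : rel 'I_n)
  (e_sym : symmetric e) (e_irr : irreflexive e)
  (sph : spherical e)
  (B0 : {fset 'rV[int]_n}) (hB0 : orth_pos_set e B0)
  (adm : admissible e B0)
  (B : {fset 'rV[int]_n}) (hB : in_Worbit e B0 B)
  (i j : 'I_n) (hij : e i j)
  (hcomm : rset e i (rset e j B) = rset e j B)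
  (hi : mlt e B0 (rset e i B) B)
  (hj : mlt e B0 (rset e j B) B) :
  (alpha i + alpha j)%R \in B.
Proof.
have Bn : orth_pos_norm2 e B.
  case: hB => w ->.
  exact/(orth_pos_norm2_act e_sym)/(orth_pos_set_norm2 e_sym).
have [ai_in|ai_notin] := boolP (alpha i \in rset e j B).
  rewrite -(refl_alpha_adj e_irr hij); apply: refl_mem_of_rset Bn ai_in _.
  by rewrite refl_alpha_adj //; apply/forallP => k; rewrite !mxE addr_ge0.
have rjB_orth g : g \in rset e j B -> root_ip e g (alpha i) = 0.
  move=> g_in; have rjBn := orth_pos_norm2_act e_sym [:: j] Bn.
  by apply: (orth_alpha_of_mem_rset e_sym sph rjBn ai_notin g_in); rewrite hcomm.
have [Pi Pj] := (mlt_prec hi, mlt_prec hj).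
exfalso; apply: (no_double_descent e_sym e_irr sph Bn hij) Pi Pj.
move=> b bB; rewrite -(root_ip_refl_adj e_sym e_irr _ hij).
have /orP[/rjB_orth //|/rjB_orth] := refl_or_opp_mem_rset e_sym sph j bB (Bn.1 b bB).2.
by rewrite root_ipNl => /eqP; rewrite oppr_eq0 => /eqP.
Qed.
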